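(* Fix integers $N\ge 2$ and $K\ge 1$. For every $r\in\mathbb{N}^+$, $M^{\text{RESCAL}}_{2r+1}$ subsumes $M^{\text{ComplEx}}_r$, i.e. $\pi(\mathcal{M}^{\text{ComplEx}}_r)\subseteq\pi(\mathcal{M}^{\text{RESCAL}}_{2r+1})$.
   Context: There are $N$ entities and $K$ relations. A score-based model assigns a score $s_k(i,j)\in\mathbb{R}$ to each triple, $i,j\in\{1,\dots,N\}$, $k\in\{1,\dots,K\}$; its scoring tensor $\mathcal{S}\in\mathbb{R}^{N\times N\times K}$ has frontal slices $\mathbf{S}_k$ with $[\mathbf{S}_k]_{ij}=s_k(i,j)$. For a real $N\times N$ matrix $\mathbf{S}$, $\pi(\mathbf{S})$ is the matrix of dense ranks: $\pi_{ij}(\mathbf{S})=1+$ (number of distinct values among entries of $\mathbf{S}$ strictly larger than $s_{ij}$). For tensors, $\pi$ acts slicewise; for a set $X$, $\pi(X)=\{\pi(x):x\in X\}$. RESCAL of size $r$: parameters $\mathbf{A}\in\mathbb{R}^{N\times r}$ (rows $\mathbf{a}_i$), $\mathbf{R}_1,\dots,\mathbf{R}_K\in\mathbb{R}^{r\times r}$, score $\mathbf{a}_i^T\mathbf{R}_k\mathbf{a}_j$. ComplEx of size $r$: parameters $\mathbf{A}\in\mathbb{C}^{N\times r}$ (rows $\mathbf{a}_i$), $\mathbf{R}\in\mathbb{C}^{K\times r}$ (rows $\mathbf{r}_k$), score $s_k(i,j)=\mathrm{Re}(\mathbf{a}_i^T\mathrm{diag}(\mathbf{r}_k)\overline{\mathbf{a}_j})$,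 where $\overline{\cdot}$ is complex conjugation. $\mathcal{M}^t_r$ is the set of scoring tensors of all models of type $t$ and size $r$. A class subsumes another if its set of representable ranking tensors $\pi(\mathcal{M})$ contains that of the other. *)

From mathcomp Require Import all_boot all_order all_algebra.
Set Warnings "-notation-overridden,-ambiguous-paths".

From mathcomp Require Import reals complex.
Set Implicit Arguments. Unset Strict Implicit. Unset Printing Implicit Defensive.
Import Order.TTheory GRing.Theory Num.Theory.
Local Open Scope ring_scope.

(* A scoring tensor: s i j k = s_k(i,j), entities 'I_N, relations 'I_K. *)
Definition tensor (R : Type) (N K : nat) := 'I_N -> 'I_N -> 'I_K -> R.

Definition dense_rank (R : realType) (N : nat) (S : 'I_N -> 'I_N -> R)
  (i j : 'I_N) : nat :=
  (size (undup [seq S p.1 p.2 | p <- enum {: 'I_N * 'I_N}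
                               & S i j < S p.1 p.2])).+1.

Definition pi_tensor (R : realType) (N K : nat) (S : tensor R N K) :
  tensor nat N K :=
  fun i j k => dense_rank (fun a b => S a b k) i j.

Definition rescal_score (R : realType) (N K r : nat) (A : 'M[R]_(N, r))
  (Rk : 'I_K -> 'M[R]_r) : tensor R N K :=
  fun i j k => (row i A *m Rk k *m (row j A)^T) 0 0.

Definition complex_score (R : realType) (N K r : nat) (A : 'M[R[i]]_(N, r))
  (Rm : 'M[R[i]]_(K, r)) : tensor R N K :=
  fun i j k => complex.Re (\sum_(l < r) A i l * Rm k l * conjc (A j l)).

Definition in_rescal (R : realType) (N K r : nat) (S : tensor R N K) : Prop :=
  exists (A : 'M[R]_(N, r)) (Rk : 'I_K -> 'M[R]_r), S = rescal_score A Rk.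

Definition in_complex (R : realType) (N K r : nat) (S : tensor R N K) : Prop :=
  exists (A : 'M[R[i]]_(N, r)) (Rm : 'M[R[i]]_(K, r)), S = complex_score A Rm.

(* ComplEx is a special case of RESCAL of size 2r: writing a_i = x_i + i y_i
   and r_k = u_k + i v_k, the score Re(a_i^T diag(r_k) conj(a_j)) is the
   bilinear form of the real vectors [x_i y_i], [x_j y_j] with the block
   matrix [[diag u_k, diag v_k], [-diag v_k, diag u_k]].  RESCAL models of
   size m embed in size m + n by padding with zeros, so the ComplEx scoring
   tensor itself lies in M^RESCAL_(2r+1) and has the same ranks. *)
From mathcomp Require Import all_boot all_order all_algebra.
From mathcomp Require Import reals complex.
From mathcomp Require Import ring.
From Stdlib Require Import FunctionalExtensionality.
Import GRing.Theory.
Local Open Scope ring_scope.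

Section ComplexAsRescal.
Variable R : realType.

Lemma Re_sum (r : nat) (F : 'I_r -> R[i]) :
  complex.Re (\sum_(l < r) F l) = \sum_(l < r) complex.Re (F l).
Proof. by apply: (big_morph (@complex.Re R)) => // [[a b] [c d]]. Qed.

Lemma Re_mul_conjc (a z b : R[i]) :
  complex.Re (a * z * conjc b) =
    complex.Re a * complex.Re z * complex.Re b
  + complex.Re a * complex.Im z * complex.Im b
  - complex.Im a * complex.Im z * complex.Re b
  + complex.Im a * complex.Re z * complex.Im b.
Proof. by case: a z b => [a1 a2] [x y] [c d] /=; ring. Qed.

Lemma diag_bilinear_form (r : nat) (p d q : 'rV[R]_r) :
  (p *m diag_mx d *m q^T) 0 0 = \sum_(l < r) p 0 l * d 0 l * q 0 l.
Proof. by rewrite mul_mx_diag !mxE; apply: eq_bigr => l _; rewrite !mxE. Qed.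

Definition rotation_block {r : nat} (u v : 'rV[R]_r) : 'M[R]_(r + r) :=
  block_mx (diag_mx u) (diag_mx v) (diag_mx (- v)) (diag_mx u).

Lemma rotation_block_bilinear_form (r : nat) (p q s t u v : 'rV[R]_r) :
  (row_mx p q *m rotation_block u v *m (row_mx s t)^T) 0 0 =
  \sum_(l < r) (p 0 l * u 0 l * s 0 l + p 0 l * v 0 l * t 0 l
                - q 0 l * v 0 l * s 0 l + q 0 l * u 0 l * t 0 l).
Proof.
rewrite mul_row_block tr_row_mx mul_row_col !mulmxDl.
rewrite [in LHS]mxE [X in X + _]mxE [X in _ + X]mxE !diag_bilinear_form -!big_split.
by apply: eq_bigr => l _ /=; rewrite mxE; ring.
Qed.

Lemma complex_score_rescal (N K r : nat)
    (A : 'M[R[i]]_(N, r)) (Rm : 'M[R[i]]_(K, r)) :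
  complex_score A Rm =
  rescal_score (row_mx (map_mx (@complex.Re R) A) (map_mx (@complex.Im R) A))
    (fun k => rotation_block (row k (map_mx (@complex.Re R) Rm))
                             (row k (map_mx (@complex.Im R) Rm))).
Proof.
apply: functional_extensionality => i; apply: functional_extensionality => j.
apply: functional_extensionality => k.
rewrite /rescal_score /complex_score !row_row_mx rotation_block_bilinear_form Re_sum.
by apply: eq_bigr => l _; rewrite Re_mul_conjc !mxE.
Qed.

Lemma in_complex_rescal (N K r : nat) (S : tensor R N K) :
  in_complex r S -> in_rescal (r + r) S.
Proof. by move=> [A [Rm ->]]; rewrite complex_score_rescal; do 2!eexists. Qed.

Lemma rescal_score_pad (N K m n : nat)
    (A : 'M[R]_(N, m)) (Rk : 'I_K -> 'M[R]_m) :
  rescal_score (row_mx A (0 : 'M_(N, n))) (fun k => block_mx (Rk k) 0 0 0) =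
  rescal_score A Rk.
Proof.
apply: functional_extensionality => i; apply: functional_extensionality => j.
apply: functional_extensionality => k.
rewrite /rescal_score !row_row_mx !row0 mul_row_block !mulmx0 ?mul0mx !addr0.
by rewrite tr_row_mx trmx0 mul_row_col mulmx0 addr0.
Qed.

Lemma in_rescal_pad (N K m n : nat) (S : tensor R N K) :
  in_rescal m S -> in_rescal (m + n) S.
Proof. by move=> [A [Rk ->]]; rewrite -(@rescal_score_pad _ _ _ n); do 2!eexists. Qed.

End ComplexAsRescal.

Theorem corollary1 (R : realType) (N K : nat) (hN : (2 <= N)%N) (hK : (1 <= K)%N)
  (r : nat) (hr : (0 < r)%N) (S : tensor R N K) :
  in_complex r S ->
  exists S' : tensor R N K, in_rescal (2 * r + 1) S' /\ pi_tensor S' = pi_tensor S.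
Proof.
move=> hS; exists S; split => //.
by rewrite mul2n -addnn; apply: in_rescal_pad; apply: in_complex_rescal.
Qed.
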